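(* Fix $H\in(3/4,1)$, $\mu\in\mathbb{R}$, $\sigma>0$. For $\alpha>0$ let $Q^{\alpha}$ be the law on $\mathcal{C}[0,1]$ of $\alpha Z^H_t+B_t$, $t\in[0,1]$, where $B$ is a standard Brownian motion and $Z^H$ an independent fractional Brownian motion with Hurst parameter $H$, and let $Q_{\mu\alpha/\sigma}$ be the law on $\mathcal{C}[0,1]$ of $W_t-\frac{\mu\alpha}{\sigma}t$, $W$ a standard Brownian motion. For $n\ge1$ let $Y_n(\omega)=(\omega(\tfrac1n)-\omega(0),\dots,\omega(1)-\omega(\tfrac{n-1}n))^T$ and let $Q^{\alpha,n}$, $Q^n_{\mu\alpha/\sigma}$ be the restrictions of $Q^\alpha$, $Q_{\mu\alpha/\sigma}$ to $\sigma(Y_n)$. Then for each $n>1$, $(Q^{\alpha,n})_{\alpha>0}$ is entirely asymptotically separable from $(Q^n_{\mu\alpha/\sigma})_{\alpha>0}$ as $\alpha\to\infty$: there exist $\alpha_k\to\infty$ and sets $A^k\in\sigma(Y_n)$ with $\lim_{k\to\infty}Q^{\alpha_k,n}(A^k)=1$ and $\lim_{k\to\infty}Q^n_{\mu\alpha_k/\sigma}(A^k)=0$.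
   Context: A fractional Brownian motion with Hurst parameter $H$ is a continuous centred Gaussian process with covariance $\frac12(t^{2H}+s^{2H}-|t-s|^{2H})$. *)

From HB Require Import structures.
From mathcomp Require Import all_boot all_order all_algebra.
From mathcomp Require Import all_classical all_reals all_analysis.
From mathcomp Require Import normal_distribution.
Set Implicit Arguments. Unset Strict Implicit. Unset Printing Implicit Defensive.
Import Order.TTheory GRing.Theory Num.Theory.
Import numFieldNormedType.Exports.
Local Open Scope classical_set_scope.
Local Open Scope ring_scope.

Definition centered_gauss {R : realType} (v : R) : set R -> \bar R :=
  fun A => if v == 0 then \d_(0:R) A else normal_prob 0 (Num.sqrt v) A.

Definition cont_centered_gaussian_process d (T : measurableType d)
    (R : realType) (P : probability T R) (X : R -> T -> R) (c : R -> R -> R) :=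
  [/\ (forall t, t \in `[0, 1] -> measurable_fun setT (X t)),
      (forall w, {within `[0, 1], continuous (fun t => X t w)}) &
      (forall (k : nat) (ts : 'I_k -> R) (a : 'I_k -> R),
        (forall i, ts i \in `[0, 1]) ->
        forall A : set R, measurable A ->
        P ((fun w => \sum_(i < k) a i * X (ts i) w) @^-1` A) =
        centered_gauss (\sum_(i < k) \sum_(j < k) a i * a j * c (ts i) (ts j)) A)].

Definition std_brownian_motion d (T : measurableType d) (R : realType)
    (P : probability T R) (B : R -> T -> R) :=
  cont_centered_gaussian_process P B (fun s t => Num.min s t).

Definition fbm_cov {R : realType} (H : R) (t s : R) : R :=
  (t `^ (2 * H) + s `^ (2 * H) - `|t - s| `^ (2 * H)) / 2.

Definition frac_brownian_motion d (T : measurableType d) (R : realType)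
    (P : probability T R) (H : R) (Z : R -> T -> R) :=
  cont_centered_gaussian_process P Z (fbm_cov H).

(* Independence of the processes X and Y (indexed by [0,1]): product rule on
   finite-dimensional cylinder events (a pi-system generating the two
   sigma-algebras). *)
Definition independent_processes d (T : measurableType d) (R : realType)
    (P : probability T R) (X Y : R -> T -> R) :=
  forall (k : nat) (ts : 'I_k -> R) (A C : 'I_k -> set R),
    (forall i, ts i \in `[0, 1]) ->
    (forall i, measurable (A i)) -> (forall i, measurable (C i)) ->
    P ((\bigcap_(i in [set: 'I_k]) (X (ts i) @^-1` A i)) `&`
       (\bigcap_(i in [set: 'I_k]) (Y (ts i) @^-1` C i))) =
    (P (\bigcap_(i in [set: 'I_k]) (X (ts i) @^-1` A i)) *
     P (\bigcap_(i in [set: 'I_k]) (Y (ts i) @^-1` C i)))%E.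

Definition incr {R : realType} (n : nat) (i : 'I_n) (w : R -> R) : R :=
  w (i.+1%:R / n%:R) - w (i%:R / n%:R).

Definition sigmaY {R : realType} (n : nat) : set (set (R -> R)) :=
  g_sigma_preimage (@incr R n).

(* Only the first increment Y = w(1/n) - w(0) is used.  With alpha_k = (k+1)^2,
   gamma = mu/(sigma n) and A_k = {|Y + alpha_k gamma| > k}: under Q^{alpha_k},
   Y + alpha_k gamma = alpha_k (Z_inc + gamma) + B_inc, and Z_inc + gamma <> 0
   almost surely because Z_inc is a nondegenerate Gaussian, so the probability
   tends to 1; under the drifted Wiener law, Y + alpha_k gamma is exactly the
   Wiener increment, so the probability tends to 0. *)
From HB Require Import structures.
From mathcomp Require Import all_boot all_order all_algebra.
From mathcomp Require Import all_classical all_reals all_analysis.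
From mathcomp Require Import normal_distribution.
From mathcomp Require Import lra ring.
Import Order.TTheory GRing.Theory Num.Theory.
Import numFieldNormedType.Exports.
Local Open Scope classical_set_scope.
Local Open Scope ring_scope.

Lemma norm_scaled_sum_le (R : realFieldType) (k : nat) (y b : R) :
  `|k.+1%:R ^+ 2 * y + b| <= k%:R -> `|b| <= k%:R -> `|y| <= 2 / k.+1%:R.
Proof.
move=> le_sum le_b; have k1_gt0 : (0 : R) < k.+1%:R by rewrite ltr0n.
have le_scaled : k.+1%:R ^+ 2 * `|y| <= 2 * k.+1%:R.
  rewrite -[X in X * _]ger0_norm ?exprn_ge0 ?ler0n // -normrM.
  have := ler_normD (k.+1%:R ^+ 2 * y + b) (- b); rewrite addrK normrN.
  move=> /le_trans; apply; rewrite mulr2n mulrDl mul1r lerD //.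
    by rewrite (le_trans le_sum) // ler_nat.
  by rewrite (le_trans le_b) // ler_nat.
rewrite ler_pdivlMr // -(ler_pM2l k1_gt0); move: le_scaled; rewrite expr2; nra.
Qed.

Section real_random_variable.
Context d (T : measurableType d) (R : realType) (P : probability T R).

Lemma measurable_set_gt (f : T -> R) (a : R) :
  measurable_fun setT f -> measurable [set w | a < f w].
Proof.
move=> mf; have := mf measurableT _ (measurable_itv `]a, +oo[).
by rewrite setTI; congr measurable; apply/seteqP; split => w /=; rewrite in_itv /= andbT.
Qed.

Lemma measurable_set_le (f : T -> R) (a : R) :
  measurable_fun setT f -> measurable [set w | f w <= a].
Proof.
move=> mf; have := mf measurableT _ (measurable_itv `]-oo, a]).
by rewrite setTI; congr measurable; apply/seteqP; split => w /=; rewrite in_itv /=.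
Qed.

Lemma prob_abs_gt_cvg0 (X : T -> R) : measurable_fun setT X ->
  (fun k : nat => P [set w | k%:R < `|X w|]) @ \oo --> 0%E.
Proof.
move=> mX; have mA : measurable_fun setT (fun w => `|X w|) by exact: measurableT_comp.
have := @nonincreasing_cvg_mu _ _ _ P (fun k : nat => [set w | k%:R < `|X w|]).
have -> : \bigcap_k [set w | k%:R < `|X w|] = set0.
  apply/seteqP; split => // w /= /(_ (Num.bound `|X w|) I) /=.
  by rewrite ltNge (ltW (archi_boundP _)).
rewrite measure0; apply.
- by rewrite (le_lt_trans (probability_le1 _ _)) ?ltry//; exact: measurable_set_gt.
- by move=> k; exact: measurable_set_gt.
- by [].
- by move=> i j ij; apply/subsetPset => w /=; apply: le_lt_trans; rewrite ler_nat.
Qed.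

Lemma prob_abs_sub_le_cvg0 (X : T -> R) (a r : R) : 0 < r ->
  measurable_fun setT X -> P (X @^-1` [set a]) = 0%E ->
  (fun k : nat => P [set w | `|X w - a| <= r / k.+1%:R]) @ \oo --> 0%E.
Proof.
move=> r0 mX Pa.
have mA : measurable_fun setT (fun w => `|X w - a|).
  by apply: measurableT_comp => //; exact: measurable_realfun.measurable_funB.
have := @nonincreasing_cvg_mu _ _ _ P
  (fun k : nat => [set w | `|X w - a| <= r / k.+1%:R]).
have -> : \bigcap_k [set w | `|X w - a| <= r / k.+1%:R] = X @^-1` [set a].
  apply/seteqP; split => w /=; last first.
    by move=> /= Xa k _ /=; rewrite Xa subrr normr0 divr_ge0 ?ltW.
  move=> close; apply/eqP; rewrite -subr_eq0 -normr_eq0; apply/negP => /negP xa0.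
  have xa_gt0 : 0 < `|X w - a| by rewrite lt_def xa0 normr_ge0.
  pose k := Num.bound (r / `|X w - a|).
  have := close k I; rewrite /= ler_pdivlMr // => le_xa.
  have := archi_boundP (ltW (divr_gt0 r0 xa_gt0)); rewrite ltr_pdivrMr // -/k.
  have : (k%:R : R) <= k.+1%:R by rewrite ler_nat.
  move: le_xa xa_gt0; generalize (k.+1%:R : R) (k%:R : R) `|X w - a|.
  by clear => x y z *; nra.
move=> cvg_cap; rewrite -Pa; apply: cvg_cap.
- by rewrite (le_lt_trans (probability_le1 _ _)) ?ltry//; exact: measurable_set_le.
- by move=> k; exact: measurable_set_le.
- by have := mX measurableT _ (measurable_set1 a); rewrite setTI.
- move=> i j ij; apply/subsetPset => w /= h; apply: (le_trans h).
  by rewrite ler_pM2l // lef_pV2 ?posrE// ler_nat.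
Qed.

Lemma prob_scaled_far_cvg1 (U V : T -> R) (a : R) :
  measurable_fun setT U -> measurable_fun setT V -> P (U @^-1` [set a]) = 0%E ->
  (fun k : nat => P [set w | k%:R < `|k.+1%:R ^+ 2 * (U w - a) + V w|])
    @ \oo --> 1%E.
Proof.
move=> mU mV Ua.
pose S k := [set w | k%:R < `|k.+1%:R ^+ 2 * (U w - a) + V w|].
have mS k : measurable (S k).
  apply: measurable_set_gt; apply: measurableT_comp => //.
  apply: measurable_realfun.measurable_funD => //.
  apply: measurable_realfun.measurable_funM => //.
  exact: measurable_realfun.measurable_funB.
have -> : (fun k => P (S k)) = (fun k => 1 - P (~` S k))%E.
  apply: funext => k; rewrite -[in LHS](setCK (S k)) probability_setC //.
  exact: measurableC.
rewrite -[X in _ --> X](sube0 1%E); apply: cvgeB => //; first exact: cvg_cst.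
pose V_far k := [set w | k%:R < `|V w|].
pose U_near k := [set w | `|U w - a| <= 2 / k.+1%:R].
have mV_far k : measurable (V_far k).
  by apply: measurable_set_gt; exact: measurableT_comp.
have mU_near k : measurable (U_near k).
  apply: measurable_set_le; apply: measurableT_comp => //.
  exact: measurable_realfun.measurable_funB.
apply: (@squeeze_cvge _ _ _ _ (fun=> 0%E) _
  (fun k => P (V_far k) + P (U_near k))%E); last 2 first.
- exact: cvg_cst.
- rewrite -[X in _ --> X](adde0 0%E); apply: cvgeD => //.
    exact: prob_abs_gt_cvg0.
  exact: prob_abs_sub_le_cvg0.
apply: filterE => k; rewrite measure_ge0 /=.
apply: le_trans (measureU2 _ (mV_far k) (mU_near k)).
apply: le_measure; rewrite ?inE; [exact: measurableC|exact: measurableU|].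
move=> w /= /negP; rewrite -leNgt => le_sum.
have [|le_V] := ltP (k%:R) `|V w|; [by left|right].
exact: norm_scaled_sum_le le_sum le_V.
Qed.

End real_random_variable.

Lemma centered_gauss_set1 (R : realType) (v x : R) : v != 0 ->
  centered_gauss v [set x] = 0%E.
Proof.
move=> /negbTE v0; rewrite /centered_gauss v0.
have null_x : (@lebesgue_measure R).-null_set [set x].
  move=> A mA Ax; apply/eqP; rewrite eq_le measure_ge0 andbT.
  by rewrite -(lebesgue_measure_set1 x) le_measure // inE.
exact: normal_prob_dominates null_x _ (measurable_set1 x) (@subset_refl _ _).
Qed.

Lemma gaussian_process_increment_measurable d (T : measurableType d)
    (R : realType) (P : probability T R) (X : R -> T -> R) (c : R -> R -> R)
    (s t : R) :
  cont_centered_gaussian_process P X c -> s \in `[0, 1] -> t \in `[0, 1] ->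
  measurable_fun setT (fun w => X t w - X s w).
Proof.
by move=> [mX _ _] s01 t01; apply: measurable_realfun.measurable_funB; exact: mX.
Qed.

Lemma gaussian_process_increment_law d (T : measurableType d) (R : realType)
    (P : probability T R) (X : R -> T -> R) (c : R -> R -> R) (s t : R)
    (A : set R) :
  cont_centered_gaussian_process P X c ->
  s \in `[0, 1] -> t \in `[0, 1] -> measurable A ->
  P ((fun w => X t w - X s w) @^-1` A) =
  centered_gauss (c t t - c t s - c s t + c s s) A.
Proof.
move=> [_ _ fdd] s01 t01 mA.
pose ts (i : 'I_2) := if val i == 0%N then t else s.
pose a (i : 'I_2) : R := if val i == 0%N then 1 else -1.
have ts01 i : ts i \in `[0, 1] by rewrite /ts; case: ifP.
have := fdd 2%N ts a ts01 A mA.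
have -> : (fun w => \sum_(i < 2) a i * X (ts i) w) = (fun w => X t w - X s w).
  by apply: funext => w; rewrite !big_ord_recl big_ord0 /a /ts /= mul1r mulN1r addr0.
by move=> ->; congr centered_gauss; rewrite !big_ord_recl !big_ord0 /a /ts /=; ring.
Qed.

Lemma fbm_cov_increment (R : realType) (H t : R) : 0 < H -> 0 <= t ->
  fbm_cov H t t - fbm_cov H t 0 - fbm_cov H 0 t + fbm_cov H 0 0 = t `^ (2 * H).
Proof.
move=> H_gt0 t_ge0; have H2 : 2 * H != 0 by rewrite mulf_neq0 // gt_eqF.
rewrite /fbm_cov !subrr !subr0 !sub0r normrN normr0 powR0 // ger0_norm //.
by field.
Qed.

Lemma fbm_increment_set1 d (T : measurableType d) (R : realType)
    (P : probability T R) (H : R) (Z : R -> T -> R) (t x : R) :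
  0 < H -> 0 < t <= 1 -> frac_brownian_motion P H Z ->
  P ((fun w => Z t w - Z 0 w) @^-1` [set x]) = 0%E.
Proof.
move=> H_gt0 /andP[t_gt0 t_le1] fbmZ.
rewrite (@gaussian_process_increment_law _ _ _ _ _ _ 0 t _ fbmZ); last 3 first.
- by rewrite in_itv /= lexx ler01.
- by rewrite in_itv /= ltW.
- exact: measurable_set1.
by rewrite fbm_cov_increment ?ltW // centered_gauss_set1 // powR_eq0 gt_eqF.
Qed.

Lemma sigmaY_incr_preimage (R : realType) (n : nat) (i : 'I_n) (S : set R) :
  measurable S -> sigmaY n (incr i @^-1` S).
Proof.
move=> mS; apply: sub_sigma_algebra; rewrite (bigD1 i) //=; left.
by exists S => //; rewrite setTI.
Qed.

Lemma incr_ord0 (R : realType) (n : nat) (w : R -> R) :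
  incr (@ord0 n) w = w n.+1%:R^-1 - w 0.
Proof. by rewrite /incr /= mul0r div1r. Qed.

Theorem lemma3p9 (R : realType) (H mu sigma : R) (n : nat)
    (d d' : measure_display) (T : measurableType d) (T' : measurableType d')
    (P : probability T R) (P' : probability T' R)
    (B Z : R -> T -> R) (W : R -> T' -> R) :
  3 / 4 < H < 1 -> 0 < sigma -> (1 < n)%N ->
  std_brownian_motion P B -> frac_brownian_motion P H Z ->
  independent_processes P B Z ->
  std_brownian_motion P' W ->
  exists (alpha : nat -> R) (A : nat -> set (R -> R)),
    [/\ (forall k, 0 < alpha k),
        alpha @ \oo --> +oo,
        (forall k, sigmaY n (A k)),
        (fun k => P ((fun w t => alpha k * Z t w + B t w) @^-1` A k))
          @ \oo --> 1%E &
        (fun k => P' ((fun w t => W t w - mu * alpha k / sigma * t) @^-1` A k))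
          @ \oo --> 0%E].
Proof.
move=> /andP[H_gt34 _] _ + bmB fbmZ _ bmW; case: n => // n _.
have H_gt0 : 0 < H by apply: lt_trans H_gt34; rewrite divr_gt0.
pose t1 : R := n.+1%:R^-1.
have t1_in : 0 < t1 <= 1 by rewrite invr_gt0 ltr0n invf_le1 ?ltr0n // ler1n.
have [t0_01 t1_01] : (0 : R) \in `[0, 1] /\ t1 \in `[0, 1].
  by case/andP: t1_in => t1_gt0 t1_le1; rewrite !in_itv /= lexx ler01 t1_le1 ltW.
pose gam := mu / sigma * t1.
pose alpha k : R := k.+1%:R ^+ 2.
pose A k := incr (@ord0 n) @^-1` [set y | k%:R < `|y + alpha k * gam|].
exists alpha, A; split.
- by move=> k; rewrite exprn_gt0 // ltr0n.
- apply: (ger_cvgy _ cvgr_idn); apply: filterE => k.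
  by rewrite /alpha -natrX ler_nat (leq_trans (leqnSn k)) // expnS expn1 leq_pmulr.
- move=> k; apply: sigmaY_incr_preimage; apply: measurable_set_gt.
  by apply: measurableT_comp => //; exact: measurable_realfun.measurable_funD.
- set Zi := fun w => Z t1 w - Z 0 w; set Bi := fun w => B t1 w - B 0 w.
  have -> : (fun k => P ((fun w t => alpha k * Z t w + B t w) @^-1` A k)) =
      (fun k : nat => P [set w | k%:R < `|alpha k * (Zi w - - gam) + Bi w|]).
    apply: funext => k; congr (P _); apply/seteqP; split => w;
      by rewrite /A /= incr_ord0 /Zi /Bi opprK;
         have -> : alpha k * (Z t1 w - Z 0 w + gam) + (B t1 w - B 0 w) =
           alpha k * Z t1 w + B t1 w - (alpha k * Z 0 w + B 0 w) + alpha k * gam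
           by ring.
  apply: (@prob_scaled_far_cvg1 _ _ _ P Zi Bi (- gam)).
  + exact: gaussian_process_increment_measurable fbmZ t0_01 t1_01.
  + exact: gaussian_process_increment_measurable bmB t0_01 t1_01.
  + exact: fbm_increment_set1 _ _ _ _ H_gt0 t1_in fbmZ.
- have -> : (fun k => P' ((fun w t => W t w - mu * alpha k / sigma * t) @^-1` A k)) =
      (fun k : nat => P' [set w | k%:R < `|W t1 w - W 0 w|]).
    apply: funext => k; congr (P' _); apply/seteqP; split => w;
      by rewrite /A /= incr_ord0 /gam;
         have -> : W t1 w - mu * alpha k / sigma * t1 - (W 0 w - mu * alpha k / sigma * 0)
           + alpha k * (mu / sigma * t1) = W t1 w - W 0 w by ring.
  apply: prob_abs_gt_cvg0.
  exact: gaussian_process_increment_measurable bmW t0_01 t1_01.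
Qed.
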